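(* Let $d,N,m\ge1$ be integers and let $x_1,\dots,x_m$ be independent random variables uniformly distributed on $\Gamma_N^d$. Let $\mu_m=\frac1m\sum_{\nu=1}^m\delta_{x_\nu}$ and let $h\ge1$. Then the event $$\max_{u\in\Gamma_N^d\setminus\{0\}}|\widehat{\mu_m}(Nu)|\le\frac{4\log^{1/2}(8N^{d+h})}{m^{1/2}}$$ has probability at least $1-N^{-h}$.
   Context: $\Gamma_N=\{k/N:k=0,\dots,N-1\}\subset\mathbb T=\mathbb R/\mathbb Z$ and $\Gamma_N^d$ is its $d$-fold product. For $u\in\Gamma_N^d$, $\widehat{\mu_m}(Nu)=\frac1m\sum_{j=1}^m e^{-2\pi iN\langle u,x_j\rangle}$ (with $\mathbb T$ identified with $[0,1)$). *)

From HB Require Import structures.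
From mathcomp Require Import all_boot all_order all_algebra.
From mathcomp Require Import all_classical all_reals all_analysis.
From mathcomp Require Import complex.
Set Implicit Arguments. Unset Strict Implicit. Unset Printing Implicit Defensive.
Import Order.TTheory GRing.Theory Num.Theory.
Local Open Scope ring_scope.
Local Open Scope complex_scope.

(* A point of Gamma_N^d = {k/N : k = 0..N-1}^d is encoded by its integer
   numerators k : {ffun 'I_d -> 'I_N}; its real coordinates (T identified
   with [0,1)) are k_i / N. *)
Definition grid_pt (R : realType) (d N : nat) (k : {ffun 'I_d -> 'I_N}) (i : 'I_d) : R :=
  (nat_of_ord (k i))%:R / N%:R.

Definition gdot (R : realType) (d N : nat) (u x : {ffun 'I_d -> 'I_N}) : R :=
  \sum_(i < d) grid_pt R u i * grid_pt R x i.

Definition expm2pi (R : realType) (t : R) : R[i] :=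
  (cos (2 * pi * t)) +i* (- sin (2 * pi * t)).

Definition mu_hat (R : realType) (d N m : nat)
    (x : {ffun 'I_m -> {ffun 'I_d -> 'I_N}}) (u : {ffun 'I_d -> 'I_N}) : R[i] :=
  (m%:R)^-1 * \sum_(j < m) expm2pi (N%:R * gdot R u (x j)).

Definition grid0 (d N : nat) (HN : (0 < N)%N) : {ffun 'I_d -> 'I_N} :=
  [ffun _ => Ordinal HN].

(* Probability of an event for m independent uniform points on Gamma_N^d,
   i.e. the uniform probability on the product space (Gamma_N^d)^m. *)
Definition unif_prob (R : realType) (T : finType) (E : {set T}) : R :=
  #|E|%:R / #|T|%:R.

From HB Require Import structures.
From mathcomp Require Import all_boot all_order all_algebra.
From mathcomp Require Import all_classical all_reals all_analysis.
From mathcomp Require Import complex.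
From mathcomp Require Import ring lra.
Import Order.TTheory GRing.Theory Num.Theory.
Local Open Scope ring_scope.
Local Open Scope complex_scope.

(* For a fixed frequency u <> 0 the summands e(-N<u, x_j>) of mu_hat are
   i.i.d., of modulus 1 and of mean zero, since a nontrivial character sums to
   zero over the group Gamma_N^d.  Hoeffding's inequality, applied to each of
   +-Re and +-Im, bounds the probability that |mu_hat(Nu)| exceeds
   4 sqrt(L/m) by 4 exp(-L).  A union bound over the N^d frequencies with
   L = log(8 N^(d+h)) leaves a failure probability of at most N^(-h)/2. *)

Section Hoeffding.
Variable R : realType.

Lemma expR_le_1Dx_sqr (z : R) : z <= 1/2 -> expR z <= 1 + z + 2 * z ^+ 2.
Proof.
(* [expR z * (1 - z) <= expR z * expR (- z) = 1 <= (1 + z + 2 z^2) (1 - z)] *)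
move=> hz; have hp : 0 < 1 - z by lra.
rewrite -(ler_pM2r hp); apply: (@le_trans _ _ 1).
  rewrite -[X in _ <= X](expRxMexpNx_1 z); apply: ler_wpM2l; first exact: expR_ge0.
  by have := expR_ge1Dx (- z); lra.
have : 0 <= z ^+ 2 * (1 - 2 * z) by apply: mulr_ge0; [exact: sqr_ge0 | lra].
have -> : (1 + z + 2 * z ^+ 2) * (1 - z) = 1 + z ^+ 2 * (1 - 2 * z) by ring.
lra.
Qed.

Lemma card_gt_le_sum_expR {X : finType} (F : X -> R) (a l : R) : 0 <= l ->
  #|[set x | a < F x]|%:R <= \sum_x expR (l * (F x - a)).
Proof.
move=> hl; rewrite -sum1_card natr_sum [leRHS](bigID [in [set x | a < F x]]) /= -[leLHS]addr0.
apply: lerD; last by apply: sumr_ge0 => x _; exact: expR_ge0.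
apply: ler_sum => x; rewrite inE => hx; apply: le_trans (expR_ge1Dx _).
by rewrite lerDl mulr_ge0 // subr_ge0 ltW.
Qed.

Variable T : finType.

Lemma sum_expR_mean0_le (Y : T -> R) (l : R) :
  (forall y, `|Y y| <= 1) -> \sum_y Y y = 0 -> 0 <= l <= 1/2 ->
  \sum_y expR (l * Y y) <= #|T|%:R * expR (2 * l ^+ 2).
Proof.
move=> hY hY0 /andP[hl0 hl1].
apply: (@le_trans _ _ (\sum_y (1 + l * Y y + 2 * l ^+ 2))).
  apply: ler_sum => y _.
  have /andP[hYl hYr] : - 1 <= Y y <= 1 by rewrite -ler_norml.
  have hlY : l * Y y <= l by rewrite -[leRHS]mulr1 ler_wpM2l.
  have hsq : (l * Y y) ^+ 2 <= l ^+ 2.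
    rewrite exprMn -[leRHS]mulr1 ler_wpM2l ?sqr_ge0 //; nra.
  by have := expR_le_1Dx_sqr (l * Y y) ltac:(lra); lra.
rewrite !big_split /= -mulr_sumr hY0 mulr0 addr0 !sumr_const.
rewrite -mulrnDl -(mulr_natl (1 + _)).
by rewrite ler_wpM2l ?ler0n // expR_ge1Dx.
Qed.

Lemma sum_ffun_expR_sum (m : nat) (f : T -> R) :
  \sum_(x : {ffun 'I_m -> T}) expR (\sum_j f (x j)) = (\sum_y expR (f y)) ^+ m.
Proof.
rewrite -[in RHS](card_ord m) -prodr_const bigA_distr_bigA.
by apply: eq_bigr => x _; rewrite expR_sum.
Qed.

Lemma card_sum_gt_le (m : nat) (Y : T -> R) (s : R) :
  (forall y, `|Y y| <= 1) -> \sum_y Y y = 0 -> 0 <= s ->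
  #|[set x : {ffun 'I_m -> T} | m%:R * s < \sum_j Y (x j)]|%:R
    <= #|T|%:R ^+ m * expR (- (m%:R * s ^+ 2 / 8)).
Proof.
move=> hY hY0 hs0; have [hs1|hs1] := lerP 1 s.
  suff -> : [set x : {ffun 'I_m -> T} | m%:R * s < \sum_j Y (x j)] = finset.set0.
    by rewrite cards0 mulr_ge0 ?exprn_ge0 ?ler0n ?expR_ge0.
  apply/setP => x; rewrite !inE ltNge; apply/negbF.
  apply: (@le_trans _ _ m%:R); last by rewrite ler_peMr ?ler0n.
  have -> : m%:R = \sum_(j < m) (1 : R) by rewrite sumr_const card_ord.
  by apply: ler_sum => j _; exact: le_trans (ler_norm _) (hY _).
(* Chernoff with [l = s / 4], which turns [- l m s + 2 m l^2] into [- m s^2 / 8]. *)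
pose l := s / 4.
have hl : 0 <= l by rewrite /l; lra.
have hmgf : \sum_y expR (l * Y y) <= #|T|%:R * expR (2 * l ^+ 2).
  by apply: sum_expR_mean0_le => //; rewrite /l; apply/andP; split; lra.
have hmgfX : (\sum_y expR (l * Y y)) ^+ m <= (#|T|%:R * expR (2 * l ^+ 2)) ^+ m.
  by rewrite lerXn2r ?nnegrE ?sumr_ge0 ?mulr_ge0 ?ler0n // => *; exact: expR_ge0.
apply: le_trans (card_gt_le_sum_expR (fun x : {ffun 'I_m -> T} => \sum_j Y (x j)) _ _ hl) _.
under eq_bigr => x _ do rewrite mulrBr expRD mulr_sumr.
rewrite -mulr_suml (sum_ffun_expR_sum m (fun y => l * Y y)).
apply: le_trans (ler_wpM2r (expR_ge0 _) hmgfX) _.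
rewrite exprMn -expRM_natl -[leLHS]mulrA -expRD ler_wpM2l ?exprn_ge0 ?ler0n //.
by rewrite ler_expR /l; lra.
Qed.
End Hoeffding.

Lemma sum_expr_root1_eq0 (F : idomainType) (w : F) (n : nat) :
  w ^+ n = 1 -> w != 1 -> \sum_(i < n) w ^+ i = 0.
Proof.
move=> wn1 w1; have := subrX1 w n; rewrite wn1 subrr => /esym/eqP.
by rewrite mulf_eq0 subr_eq0 (negbTE w1) => /eqP.
Qed.

Section Characters.
Variable R : realType.

Lemma expm2piD (a b : R) : expm2pi (a + b) = expm2pi a * expm2pi b.
Proof. by rewrite /expm2pi mulrDr cosD sinD; simpc; congr (_ +i* _); ring. Qed.

Lemma expm2pi0 : expm2pi (0 : R) = 1.
Proof. by rewrite /expm2pi mulr0 cos0 sin0 oppr0. Qed.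

Lemma expm2pi_sum (I : Type) (r : seq I) (P : pred I) (f : I -> R) :
  expm2pi (\sum_(i <- r | P i) f i) = \prod_(i <- r | P i) expm2pi (f i).
Proof. exact: (big_morph _ expm2piD expm2pi0). Qed.

Lemma expm2pi_mulrn (t : R) (n : nat) : expm2pi (t *+ n) = expm2pi t ^+ n.
Proof.
have -> : t *+ n = \sum_(i < n) t by rewrite sumr_const card_ord.
by rewrite expm2pi_sum prodr_const card_ord.
Qed.

Lemma expm2pi_nat (n : nat) : expm2pi (n%:R : R) = 1.
Proof.
rewrite expm2pi_mulrn [expm2pi 1]/expm2pi mulr1 mulr_natl cos2pi sin2pi oppr0.
exact: expr1n.
Qed.

Lemma expm2pi_neq1 (t : R) : 0 < t < 1 -> expm2pi t != 1.
Proof.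
move=> /andP[t0 t1]; apply/eqP => /(congr1 (@complex.Re R)) /=.
have -> : 2 * pi * t = (pi * t) *+ 2 by rewrite mulr2n; ring.
rewrite cos_mulr2n => hcos.
have hsin : 0 < sin (pi * t).
  by apply: sin_gt0_pi; rewrite mulr_gt0 ?pi_gt0 //= gtr_pMr ?pi_gt0.
by have := cos2Dsin2 (pi * t); nra.
Qed.

Lemma expm2pi_gdot (d N : nat) (u y : {ffun 'I_d -> 'I_N}) : (0 < N)%N ->
  expm2pi (N%:R * gdot R u y) = \prod_i expm2pi ((u i)%:R / N%:R) ^+ y i.
Proof.
move=> N0; have hN : (N%:R : R) != 0 by rewrite pnatr_eq0 -lt0n.
rewrite /gdot mulr_sumr expm2pi_sum; apply: eq_bigr => i _.
by rewrite -expm2pi_mulrn /grid_pt -mulr_natr; congr expm2pi; field.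
Qed.

Lemma sum_expm2pi_gdot_eq0 (d N : nat) (HN : (0 < N)%N) (u : {ffun 'I_d -> 'I_N}) :
  u != grid0 d HN -> \sum_y expm2pi (N%:R * gdot R u y) = 0.
Proof.
move=> u0; have [i ui0] : exists i, u i != Ordinal HN.
  apply/existsP; apply: contraR u0 => /existsPn ui.
  by apply/eqP/ffunP => i; rewrite ffunE; apply/eqP/negPn.
have hN : (0 : R) < N%:R by rewrite ltr0n.
under eq_bigr => y _ do rewrite expm2pi_gdot //.
rewrite -(bigA_distr_bigA (fun i (k : 'I_N) => expm2pi ((u i)%:R / N%:R) ^+ k)).
rewrite (bigD1 i) //= sum_expr_root1_eq0 ?mul0r //.
  by rewrite -expm2pi_mulrn -(mulr_natr ((u i)%:R / N%:R)) divfK ?expm2pi_nat // gt_eqF.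
apply: expm2pi_neq1; rewrite divr_gt0 ?ltr_pdivrMr ?mul1r ?ltr_nat //= ltr0n lt0n.
by apply: contra ui0 => /eqP ui; apply/eqP/val_inj.
Qed.
End Characters.

Section SignedParts.
Context {R : realType}.

Definition signed_part (k : bool * bool) (z : R[i]) : R :=
  (-1) ^+ k.1 * (if k.2 then complex.Re z else complex.Im z).

Lemma signed_partD k (z w : R[i]) :
  signed_part k (z + w) = signed_part k z + signed_part k w.
Proof. by case: z w => [a b] [c e]; rewrite /signed_part; case: k.2; rewrite /= mulrDr. Qed.

Lemma signed_part0 k : signed_part k 0 = 0.
Proof. by rewrite /signed_part; case: k.2; rewrite mulr0. Qed.

Lemma signed_part_sum k (I : Type) (r : seq I) (F : I -> R[i]) :
  signed_part k (\sum_(i <- r) F i) = \sum_(i <- r) signed_part k (F i).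
Proof. exact: (big_morph _ (signed_partD k) (signed_part0 k)). Qed.

Lemma signed_partZ k (c : R) (z : R[i]) : signed_part k (c%:C * z) = c * signed_part k z.
Proof. by case: z => a b; rewrite /signed_part; case: k.2; rewrite /=; ring. Qed.

Lemma norm_signed_part_expm2pi k (t : R) : `|signed_part k (expm2pi t)| <= 1.
Proof.
rewrite /signed_part normrM normrX normrN1 expr1n mul1r.
by case: k.2; rewrite /= ?normrN ?cos_max ?sin_max.
Qed.

Lemma exists_signed_part_gt (z : R[i]) (s : R) : 0 <= s ->
  ~~ (`|z| <= (s * Num.sqrt 2)%:C) -> exists k, s < signed_part k z.
Proof.
case: z => a b s0; rewrite normc_def lecR -ltNge /= => hz.
have ab0 : 0 <= a ^+ 2 + b ^+ 2 by rewrite addr_ge0 ?sqr_ge0.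
have hsq : 2 * s ^+ 2 < a ^+ 2 + b ^+ 2.
  have hs2 : 0 <= s * Num.sqrt 2 by rewrite mulr_ge0 ?sqrtr_ge0.
  have := sqr_sqrtr ab0; have := sqr_sqrtr (ler0n R 2); nra.
suff [ha|hb] : s < `|a| \/ s < `|b|.
- by exists (a < 0, true); rewrite /signed_part -normrEsign.
- by exists (b < 0, false); rewrite /signed_part -normrEsign.
have := real_normK (num_real a); have := real_normK (num_real b).
case: (ltrP s `|a|) => [|ha]; first by left.
case: (ltrP s `|b|) => [|hb]; first by right.
have := normr_ge0 a; have := normr_ge0 b; nra.
Qed.
End SignedParts.

Lemma card_bigcup_le (I T : finType) (P : pred I) (F : I -> {set T}) :
  (#|\bigcup_(i | P i) F i| <= \sum_(i | P i) #|F i|)%N.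
Proof.
elim/big_ind2: _ => [|A a B b hA hB|] //; first by rewrite cards0.
by rewrite (leq_trans (leq_card_setU _ _)) ?leq_add.
Qed.

Lemma le_unif_prob (R : realType) (T : finType) (E : {set T}) (p : R) :
  (0 < #|T|)%N -> #|~: E|%:R <= p * #|T|%:R -> 1 - p <= unif_prob R E.
Proof.
move=> T0 hE; have hT : (0 : R) < #|T|%:R by rewrite ltr0n.
move: hE; rewrite /unif_prob ler_pdivlMr // -(cardsC E) natrD; nra.
Qed.

Section MuHat.
Variables (R : realType) (d N m : nat) (HN : (0 < N)%N).
Local Notation point := {ffun 'I_d -> 'I_N}.
Local Notation sample := {ffun 'I_m -> point}.

Definition signed_wave (u : point) (k : bool * bool) (y : point) : R :=
  signed_part k (expm2pi (N%:R * gdot R u y)).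

Lemma sum_signed_wave_eq0 u k : u != grid0 d HN -> \sum_y signed_wave u k y = 0.
Proof.
by move=> u0; rewrite -signed_part_sum sum_expm2pi_gdot_eq0 // signed_part0.
Qed.

Lemma signed_part_mu_hat k (x : sample) u :
  signed_part k (mu_hat R x u) = m%:R^-1 * \sum_j signed_wave u k (x j).
Proof.
by rewrite /mu_hat -(rmorph_nat (real_complex R)) -fmorphV signed_partZ signed_part_sum.
Qed.

Definition mu_hat_small (t : R) : {set sample} :=
  [set x | [forall u, (u != grid0 d HN) ==> (`|mu_hat R x u| <= t%:C)]].

Lemma card_not_mu_hat_small_le (s : R) : (0 < m)%N -> 0 <= s ->
  #|~: mu_hat_small (s * Num.sqrt 2)|%:R
    <= 4 * N%:R ^+ d * #|sample|%:R * expR (- (m%:R * s ^+ 2 / 8)).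
Proof.
move=> m0 s0; have hm : (0 : R) < m%:R by rewrite ltr0n.
pose B p := [set x : sample | m%:R * s < \sum_j signed_wave p.1 p.2 (x j)].
have cover : ~: mu_hat_small (s * Num.sqrt 2) \subset \bigcup_(p | p.1 != grid0 d HN) B p.
  apply/fintype.subsetP => x; rewrite !inE negb_forall => /existsP[u].
  rewrite negb_imply => /andP[u0 /(exists_signed_part_gt _ _ s0)[k]].
  rewrite signed_part_mu_hat ltr_pdivlMl // => hk.
  by apply/finset.bigcupP; exists (u, k); rewrite ?inE.
have hB p : p.1 != grid0 d HN ->
    #|B p|%:R <= #|sample|%:R * expR (- (m%:R * s ^+ 2 / 8)) :> R.
  move=> p0; rewrite card_ffun card_ord natrX.
  apply: card_sum_gt_le s0 => [y|]; first exact: norm_signed_part_expm2pi.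
  exact: sum_signed_wave_eq0.
apply: (@le_trans _ _ (\sum_(p | p.1 != grid0 d HN) #|B p|)%:R).
  by rewrite ler_nat (leq_trans (subset_leq_card cover)) //; exact: card_bigcup_le.
rewrite natr_sum big_mkcond /=.
apply: (@le_trans _ _ (\sum_(p : point * (bool * bool))
                          #|sample|%:R * expR (- (m%:R * s ^+ 2 / 8)))).
  by apply: ler_sum => p _; case: ifP => [/hB //|_]; rewrite mulr_ge0 ?ler0n ?expR_ge0.
rewrite sumr_const card_prod (@card_ffun 'I_d 'I_N) !card_ord card_prod card_bool.
by rewrite -[_ *+ (_ * _)]mulr_natl natrM natrX le_eqVlt; apply/predU1l; ring.
Qed.

Lemma card_not_mu_hat_small_sqrt_le (L : R) : (0 < m)%N -> 0 <= L ->
  #|~: mu_hat_small (4 * Num.sqrt L / Num.sqrt m%:R)|%:R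
    <= 4 * N%:R ^+ d * #|sample|%:R * expR (- L).
Proof.
move=> m0 L0; have hm : (0 : R) < m%:R by rewrite ltr0n.
pose s := 4 * Num.sqrt L / Num.sqrt m%:R / Num.sqrt 2.
have s0 : 0 <= s by rewrite !divr_ge0 ?mulr_ge0 ?sqrtr_ge0.
have Ls : m%:R * s ^+ 2 / 8 = L.
  by rewrite /s !expr_div_n exprMn !sqr_sqrtr ?ler0n //; field; rewrite gt_eqF.
have := card_not_mu_hat_small_le s m0 s0.
by rewrite Ls divfK // sqrtr_eq0 -ltNge.
Qed.
End MuHat.

Theorem lemma3p1 (R : realType) (d N m : nat) (HN : (0 < N)%N)
    (Hd : (1 <= d)%N) (Hm : (1 <= m)%N) (h : R) (Hh : 1 <= h) :
  1 - (N%:R : R) `^ (- h) <=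
  unif_prob R
    [set x : {ffun 'I_m -> {ffun 'I_d -> 'I_N}} |
      [forall u : {ffun 'I_d -> 'I_N},
        (u != grid0 d HN) ==>
        (`|mu_hat R x u| <=
           ((4 * Num.sqrt (ln (8 * (N%:R : R) `^ (d%:R + h)))
             / Num.sqrt (m%:R))%:C))]].
Proof.
set L := ln _.
have powN : N%:R `^ (d%:R + h) = N%:R ^+ d * N%:R `^ h.
  by rewrite powRD ?powR_mulrn ?ler0n // pnatr_eq0 -lt0n HN implybT.
have powNd : 1 <= N%:R ^+ d :> R by rewrite exprn_ege1 ?ler1n.
have powNh : 1 <= N%:R `^ h.
  have N1 : (1 : R) <= N%:R by rewrite ler1n.
  by rewrite -[leLHS](powRr0 N%:R) (ler_powR N1) //; lra.
have powN1 : 1 <= N%:R ^+ d * N%:R `^ h.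
  by have := ler_pM ler01 ler01 powNd powNh; rewrite mulr1.
have L0 : 0 <= L by rewrite ln_ge0 // powN; lra.
have := @card_not_mu_hat_small_sqrt_le R d N m HN L Hm L0.
rewrite expRN lnK ?powN ?posrE; last by lra.
move=> hcard; apply: le_unif_prob; first by apply/card_gt0P; exists [ffun=> grid0 d HN].
apply: le_trans hcard _; rewrite powRN.
set X := (#|_|%:R : R); have X0 : 0 <= X := ler0n _ _.
have -> : 4 * N%:R ^+ d * X / (8 * (N%:R ^+ d * N%:R `^ h)) = (N%:R `^ h)^-1 * X / 2.
  by field; rewrite !gt_eqF ?(lt_le_trans ltr01).
have : 0 <= (N%:R `^ h)^-1 * X by rewrite mulr_ge0 // invr_ge0 (le_trans ler01).
lra.
Qed.
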